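(* Let $G$ be a finite simple graph with a perfect matching $M$ and let $\mathcal{C}$ be an optimal edge $2$-colouring of $G$. Let $\mathcal{C}_M$ be the set of colours used on edges of $M$. For each $j\in\mathcal{C}_M$ let $S_j\subseteq V(G)$ be an $M$-monochromatic set such that the edges of $M$ incident with vertices of $S_j$ are coloured $j$. Then $$|\mathcal{C}_M|\le |M|-\sum_{j\in\mathcal{C}_M}\mathrm{rp}(S_j).$$
   Context: An edge $2$-colouring assigns colours to edges (not necessarily properly) so that each vertex sees at most $2$ distinct colours; optimal means it uses the maximum number of colours. A set $S\subseteq V(G)$ is $M$-monochromatic if all edges of $M$ incident with vertices of $S$ have the same colour. $i(S;M)$ denotes the number of edges of $M$ incident with a vertex of $S$, and the repetition content of an $M$-monochromatic set $S$ is $\mathrm{rp}(S):=i(S;M)-1$. *)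

From mathcomp Require Import all_boot all_order all_algebra.
Set Implicit Arguments. Unset Strict Implicit. Unset Printing Implicit Defensive.
Import GRing.Theory Num.Theory.

Section Graph.
Variables (V : finType) (e : rel V).

Definition simple_graph : Prop := symmetric e /\ irreflexive e.

Definition edges : {set {set V}} :=
  [set [set x; y] | x in V, y in V & e x y].

Definition perfect_matching (M : {set {set V}}) : Prop :=
  M \subset edges /\ forall v : V, #|[set f in M | v \in f]| = 1%N.

(* Colourings assign a colour (a natural number) to every edge; values
   outside the edge set are irrelevant. *)
Definition colours_at (c : {set V} -> nat) (v : V) : seq nat :=
  undup [seq c f | f <- [seq f <- enum edges | v \in (f : {set V})]].

Definition edge_2_colouring (c : {set V} -> nat) : Prop :=
  forall v : V, (size (colours_at c v) <= 2)%N.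

Definition ncolours (c : {set V} -> nat) : nat :=
  size (undup [seq c f | f <- enum edges]).

Definition optimal_edge_2_colouring (c : {set V} -> nat) : Prop :=
  edge_2_colouring c /\
  forall c' : {set V} -> nat, edge_2_colouring c' -> (ncolours c' <= ncolours c)%N.

Definition colours_on (c : {set V} -> nat) (M : {set {set V}}) : seq nat :=
  undup [seq c f | f <- enum M].

Definition incident_edges (M : {set {set V}}) (S : {set V}) : {set {set V}} :=
  [set f in M | [exists v in S, v \in f]].

Definition iSM (M : {set {set V}}) (S : {set V}) : nat := #|incident_edges M S|.

Definition M_monochromatic_col (c : {set V} -> nat) (M : {set {set V}})
    (S : {set V}) (j : nat) : Prop :=
  forall f, f \in incident_edges M S -> c f = j.

Definition rp (M : {set {set V}}) (S : {set V}) : int := ((iSM M S)%:Z - 1)%R.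

End Graph.

From mathcomp Require Import all_boot all_order all_algebra.
Import GRing.Theory Num.Theory.

(* An M-edge f incident with S_j has colour j, so it is incident with S_j for
   at most one colour j, namely c f.  Hence the sets of M-edges incident with
   the S_j are pairwise disjoint subsets of M, the i(S_j;M) sum to at most |M|,
   and subtracting 1 per colour gives the bound. *)

Lemma sum_pred_le1 {I : eqType} (P : pred I) (s : seq I) (j : I) :
  uniq s -> {in s, forall i, P i -> i = j} -> (\sum_(i <- s) P i <= 1)%N.
Proof.
move=> s_uniq Pj.
have -> : (\sum_(i <- s) P i)%N = count (fun i => (i \in s) && P i) s.
  by rewrite -sumn_count sumnE big_map; apply: eq_big_seq => i ->.
apply: leq_trans (_ : count_mem j s <= 1)%N.
  by apply: sub_count => i /andP[si /(Pj i si) ->] /=.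
by rewrite count_uniq_mem ?leq_b1.
Qed.

Lemma sum_card_le_of_colour {T : finType} {I : eqType} (col : T -> I)
    (A : {set T}) (B : I -> {set T}) (s : seq I) :
  uniq s -> (forall i, i \in s -> B i \subset A) ->
  (forall i x, i \in s -> x \in B i -> col x = i) ->
  (\sum_(i <- s) #|B i| <= #|A|)%N.
Proof.
move=> s_uniq sBA Bcol.
have card_in_A i : i \in s -> #|B i| = (\sum_(x in A) (x \in B i))%N.
  move=> si; rewrite -sum1_card big_mkcond [RHS]big_mkcond /=.
  apply: eq_bigr => x _.
  case xB: (x \in B i); last by case: (x \in A).
  by rewrite (subsetP (sBA i si) x xB).
rewrite (eq_big_seq _ card_in_A) exchange_big -sum1_card leq_sum // => x _.
apply: (sum_pred_le1 (fun i => x \in B i) s (col x)) => // i si xB.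
by rewrite (Bcol i x si xB).
Qed.

Local Open Scope ring_scope.

Lemma sum_natz_sub1 {I : Type} (s : seq I) (g : I -> nat) :
  \sum_(i <- s) ((g i)%:Z - 1) = (\sum_(i <- s) g i)%N%:Z - (size s)%:Z.
Proof.
rewrite -sum1_size -!natz !natr_sum -sumrB.
by apply: eq_bigr => i _; rewrite natz.
Qed.

Theorem lemma7 (V : finType) (e : rel V) (M : {set {set V}})
    (c : {set V} -> nat) (S : nat -> {set V}) :
  simple_graph e ->
  perfect_matching e M ->
  optimal_edge_2_colouring e c ->
  (forall j, j \in colours_on c M -> M_monochromatic_col c M (S j) j) ->
  ((size (colours_on c M))%:Z <= (#|M|)%:Z - \sum_(j <- colours_on c M) rp M (S j)).
Proof.
move=> _ _ _ S_mono.
have incident_le : (\sum_(j <- colours_on c M) iSM M (S j) <= #|M|)%N.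
  apply: (sum_card_le_of_colour c M (fun j => incident_edges M (S j))).
  - exact: undup_uniq.
  - by move=> j _; apply/subsetP => f; rewrite inE => /andP[].
  - by move=> j f /S_mono; apply.
by rewrite /rp sum_natz_sub1 opprB addrCA lerDl subr_ge0 lez_nat.
Qed.
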